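(* Let $X=\mathbb L_{\geq0}$ or $X=\mathbb L$. Then $\operatorname{Homeo}_{cpt}(X)$, equipped with the compact-open topology (as maps of $X$), is countably tight.
   Context: The Closed Long Ray $\mathbb L_{\geq0}$ is $\omega_1\times[0,1)$ with the order topology of the lexicographic order; the Long Line $\mathbb L$ is obtained by gluing a copy of $\mathbb L_{\geq0}$ with reversed order and a copy with the usual order at their least points $(0,0)$. $\operatorname{Homeo}_{cpt}(X)$ is the group of homeomorphisms $h$ of $X$ with compact support $\operatorname{cl}_X\{x\mid h(x)\neq x\}$. A space is countably tight if whenever $p\in\operatorname{cl}A$ there is a countable $C\subseteq A$ with $p\in\operatorname{cl}C$. *)

From HB Require Import structures.
From mathcomp Require Import all_boot all_order all_algebra.
From mathcomp Require Import all_classical all_reals.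
From mathcomp Require Import topology_theory.topology topology_theory.order_topology
  topology_theory.function_spaces topology_theory.compact.
Set Implicit Arguments. Unset Strict Implicit. Unset Printing Implicit Defensive.
Import Order.TTheory GRing.Theory Num.Theory.
Local Open Scope classical_set_scope.
Local Open Scope ring_scope.

Fact unit_disp : Order.disp_t. Proof. exact: Order.Disp tt tt. Qed.

Section LongLines.
Context {R : realType}.

Definition in01 (x : R) : bool := (0 <= x) && (x < 1).
Definition I01 := {x : R | in01 x}.
HB.instance Definition _ := [isSub for (@sval R in01) : I01 -> R].
HB.instance Definition _ := [Choice of I01 by <:].
HB.instance Definition _ := [SubChoice_isSubOrder of I01 by <: with unit_disp].

Context {d : Order.disp_t} {W : orderType d}.

Definition LongRay_ord := (W *l I01)%type.

Definition lr_minimal (x : LongRay_ord) : bool :=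
  `[< forall y : LongRay_ord, (x <= y)%O >].

(* long line (as a linearly ordered set): a reversed copy of the long ray
   followed by a copy of the long ray, glued at their least point.
   Encoded inside  bool *l (LongRay_ord^d *l LongRay_ord):
   - (false, (x, m)) with m least, x not least   stands for  "-x"
     (ordered by the reversed order of x);
   - (true, (m, x)) with m least                stands for  "+x"
   (the common least point 0 is represented only on the [true] side). *)
Definition LL_pred (p : (bool *l (LongRay_ord^d *l LongRay_ord))%type) : bool :=
  if p.1 then lr_minimal p.2.1
  else lr_minimal p.2.2 && ~~ lr_minimal p.2.1.
Definition LongLine_ord := {p : (bool *l (LongRay_ord^d *l LongRay_ord))%type | LL_pred p}.
HB.instance Definition _ := [isSub for (@sval _ LL_pred) : LongLine_ord -> _].
HB.instance Definition _ := [Choice of LongLine_ord by <:].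
HB.instance Definition _ := [SubChoice_isSubOrder of LongLine_ord by <: with unit_disp].

End LongLines.

Definition LongRay (R : realType) d (W : orderType d) :=
  order_topology (@LongRay_ord R d W).
Definition LongLine (R : realType) d (W : orderType d) :=
  order_topology (@LongLine_ord R d W).

Definition is_omega1 d (W : orderType d) : Prop :=
  [/\ well_founded (fun x y : W => (x < y)%O),
      ~ countable [set: W] &
      forall w : W, countable [set v : W | (v < w)%O] ].

Definition homeomorphism (X : topologicalType) (f : X -> X) : Prop :=
  exists g : X -> X, [/\ cancel f g, cancel g f, continuous f & continuous g].

Definition Homeo_cpt (X : topologicalType) : set {compact-open, X -> X} :=
  [set f | homeomorphism f /\ compact (closure [set x | f x != x])].

(* countable tightness of a subspace S of a topological space T
   (closure in the subspace S is closure in T intersected with S) *)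
Definition countably_tight_subspace (T : topologicalType) (S : set T) : Prop :=
  forall (A : set T) (p : T), A `<=` S -> S p -> closure A p ->
    exists2 C : set T, [/\ C `<=` A & countable C] & closure C p.

(* A compactly supported homeomorphism [g] of a dense, conditionally complete order
   without maximum is increasing (by the intermediate value theorem), and it is the
   identity outside some bounded region, whose rational points form a countable set;
   countable families of such regions are bounded because countable subsets of
   omega_1 are.  Given [p] in the closure of [A], choose regions b_0 <= b_1 <= ...:
   b_0 contains the support of [p], and for each of the countably many finite lists of
   constraints [l < g x < r] with [x, l, r] rational points of b_n, pick one element of
   [A] satisfying them (if any) and let b_(n+1) also contain the supports of these
   picks.  By monotonicity, constraints at rational points control [g] on whole
   intervals, so by compactness every compact-open neighbourhood of [p] contains every
   homeomorphism supported in the union of the b_n that satisfies finitely many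
   constraints of one b_n satisfied by [p]; the corresponding pick is such a map. *)

From HB Require Import structures.
From mathcomp Require Import all_boot all_order all_algebra.
From mathcomp Require Import all_classical all_reals.
From mathcomp Require Import topology_theory.topology topology_theory.order_topology
  topology_theory.function_spaces topology_theory.compact.
Set Implicit Arguments. Unset Strict Implicit. Unset Printing Implicit Defensive.
Import Order.TTheory GRing.Theory Num.Theory.
Local Open Scope order_scope.
Local Open Scope classical_set_scope.

(** * Order topology *)

Section OrderTopology.
Context {d : Order.disp_t} {X : orderTopologicalType d}.
Implicit Types (x y z l r : X) (U : set X).

Lemma in_itv_convex (i : interval X) x y z :
  x <= y <= z -> x \in i -> z \in i -> y \in i.
Proof.
case: i => bl br /andP[xy yz]; rewrite !itv_boundlr => /andP[lx _] /andP[_ zr].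
by rewrite (le_trans lx) ?(le_trans _ zr) // bnd_simp.
Qed.

Lemma open_order_convex_nbhs U x : open U -> U x ->
  exists V : set X, [/\ open V, V x, V `<=` U &
    forall u v w, u <= v <= w -> V u -> V w -> V v].
Proof.
move=> oU Ux; have := open_nbhs_nbhs (conj oU Ux).
rewrite itv_nbhsE => -[i [oi xi] iU]; exists [set` i]; split => //.
  exact: itv_open_ends_open.
by move=> u v w uvw; exact: in_itv_convex.
Qed.

Lemma nbhs_left x U : nbhs x U ->
  (exists2 l, l < x & `]l, x] `<=` U) \/ `]-oo, x] `<=` U.
Proof.
rewrite itv_nbhsE => -[[[[]l|[]] [[]r|[]]] [//= _ xi] iU];
  move: xi; rewrite in_itv /= ?andbT => xi.
- left; exists l; case/andP: xi => // lx xr z; rewrite /= in_itv /= => /andP[lz zx].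
  by apply: iU; rewrite /= in_itv /= lz (le_lt_trans zx xr).
- left; exists l => // z; rewrite /= in_itv /= => /andP[lz _].
  by apply: iU; rewrite /= in_itv /= lz.
- right => z; rewrite /= in_itv /= => zx.
  by apply: iU; rewrite /= in_itv /= (le_lt_trans zx xi).
- by right => z _; apply: iU; rewrite /= in_itv.
Qed.

Lemma nbhs_right x U : nbhs x U ->
  (exists2 r, x < r & `[x, r[ `<=` U) \/ `[x, +oo[ `<=` U.
Proof.
rewrite itv_nbhsE => -[[[[]l|[]] [[]r|[]]] [//= _ xi] iU];
  move: xi; rewrite in_itv /= ?andbT => xi.
- left; exists r; case/andP: xi => // lx xr z; rewrite /= in_itv /= => /andP[xz zr].
  by apply: iU; rewrite /= in_itv /= zr (lt_le_trans lx xz).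
- right => z; rewrite /= in_itv /= andbT => xz.
  by apply: iU; rewrite /= in_itv /= andbT (lt_le_trans xi xz).
- left; exists r => // z; rewrite /= in_itv /= => /andP[_ zr].
  by apply: iU; rewrite /= in_itv /= zr.
- by right => z _; apply: iU; rewrite /= in_itv.
Qed.

Lemma nbhs_below x U z : nbhs x U -> z < x -> exists2 l, l < x & `]l, x] `<=` U.
Proof.
move=> /nbhs_left[//|xU zx]; exists z => // y; rewrite /= in_itv /= => /andP[_ yx].
by apply: xU; rewrite /= in_itv.
Qed.

Lemma nbhs_above x U z : nbhs x U -> x < z -> exists2 r, x < r & `[x, r[ `<=` U.
Proof.
move=> /nbhs_right[//|xU xz]; exists z => // y; rewrite /= in_itv /= => /andP[xy _].
by apply: xU; rewrite /= in_itv /= xy.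
Qed.

End OrderTopology.

Section DenseOrderTopology.
Context {d : Order.disp_t} {X : orderTopologicalType d}.
Implicit Types (x y z : X) (U : set X).
Hypothesis X_dense : forall x y, x < y -> exists z, x < z < y.
Hypothesis X_nomax : forall x, exists y, x < y.

Lemma nbhs_left_segment x U : nbhs x U ->
  exists d1, [/\ d1 <= x, `[d1, x] `<=` U & nbhs x `[d1, +oo[].
Proof.
move=> xU; have [[z zx]|xmin] := pselect (exists z, z < x); last first.
  exists x; split => //.
    by move=> y; rewrite /= in_itv /= => /le_anti <-; exact: nbhs_singleton.
  apply: filterS filterT => y _; rewrite /= in_itv /= andbT leNgt.
  by apply/negP => yx; apply: xmin; exists y.
have [l lx lxU] := nbhs_below xU zx; have [d1 /andP[ld1 d1x]] := X_dense lx.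
exists d1; split; first exact: ltW.
  move=> y; rewrite /= in_itv /= => /andP[d1y yx].
  by apply: lxU; rewrite /= in_itv /= yx (lt_le_trans ld1 d1y).
apply: filterS (open_nbhs_nbhs (conj (@rray_open _ X d1) _)).
  by move=> y; rewrite /= !in_itv /= !andbT => /ltW.
by rewrite /= in_itv /= d1x.
Qed.

Lemma nbhs_right_segment x U : nbhs x U ->
  exists d2, [/\ x <= d2, `[x, d2] `<=` U & nbhs x `]-oo, d2]].
Proof.
move=> xU; have [z xz] := X_nomax x; have [r xr xrU] := nbhs_above xU xz.
have [d2 /andP[xd2 d2r]] := X_dense xr; exists d2; split; first exact: ltW.
  move=> y; rewrite /= in_itv /= => /andP[xy yd2].
  by apply: xrU; rewrite /= in_itv /= xy (le_lt_trans yd2 d2r).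
apply: filterS (open_nbhs_nbhs (conj (@lray_open _ X d2) _)).
  by move=> y; rewrite /= !in_itv /= => /ltW.
by rewrite /= in_itv /= xd2.
Qed.

Lemma nbhs_segment x U : nbhs x U ->
  exists d1 d2, [/\ d1 <= x <= d2, `[d1, d2] `<=` U & nbhs x `[d1, d2]].
Proof.
move=> xU; have [d1 [d1x d1U d1n]] := nbhs_left_segment xU.
have [d2 [xd2 d2U d2n]] := nbhs_right_segment xU.
exists d1, d2; split; first by rewrite d1x xd2.
  move=> y; rewrite /= in_itv /= => /andP[d1y yd2]; have [yx|xy] := leP y x.
    by apply: d1U; rewrite /= in_itv /= d1y.
  by apply: d2U; rewrite /= in_itv /= yd2 ltW.
apply: filterS (filterI d1n d2n) => y [].
by rewrite /= !in_itv /= andbT => -> ->.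
Qed.

End DenseOrderTopology.

Section CompactInduction.
Context {T : topologicalType}.

Lemma compact_ind (K : set T) (P : set T -> Prop) : compact K -> P set0 ->
  (forall A B, P A -> P B -> P (A `|` B)) ->
  (forall A B, A `<=` B -> P B -> P A) ->
  (forall x, K x -> exists U, [/\ open U, U x & P U]) -> P K.
Proof.
move=> cK P0 PU Psub Ploc; apply: contrapT => nPK.
pose F := filter_from P (fun A => K `\` A).
have FF : ProperFilter F.
  apply: filter_from_proper; last first.
    move=> A PA; apply: contrapT => /set0P/negP; rewrite negbK => /eqP KA.
    apply: nPK; apply: (Psub _ A) => // x Kx.
    by apply: contrapT => nAx; have : (K `\` A) x by []; rewrite KA.
  apply: filter_from_filter; first by exists set0.
  move=> A B PA PB; exists (A `|` B); first exact: PU.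
  by move=> x [Kx /not_orP[]].
have [x [Kx clx]] : exists x, K x /\ cluster F x by apply: cK; exists set0.
have [U [oU Ux PUx]] := Ploc x Kx.
have [z [[_ nUz] Uz]] : (K `\` U) `&` U !=set0.
  by apply: clx; [exists U|exact: open_nbhs_nbhs].
exact: nUz.
Qed.

End CompactInduction.

Section CompactOrder.
Context {d : Order.disp_t} {X : orderTopologicalType d}.
Implicit Types (x : X) (K : set X).

Lemma compact_ubound K x0 : (forall x, exists y, x < y) -> compact K ->
  exists2 c, x0 <= c & K `<=` `]-oo, c[.
Proof.
move=> nomax cK.
apply: (compact_ind (P := fun A => exists2 c, x0 <= c & A `<=` `]-oo, c[)) => //.
- by exists x0.
- move=> A B [a x0a Aa] [b x0b Bb]; exists (Order.max a b); first by rewrite le_max x0a.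
  by move=> z [/Aa|/Bb]; rewrite /= !in_itv /= lt_max => ->; rewrite ?orbT.
- by move=> A B AB [c x0c Bc]; exists c => // z /AB /Bc.
- move=> x _; have [y xy] := nomax x; exists `]-oo, y[; split => //.
    exact: lray_open.
  exists (Order.max x0 y); first by rewrite le_max lexx.
  by move=> z; rewrite /= !in_itv /= lt_max => ->; rewrite orbT.
Qed.

Lemma compact_lbound K x0 : (forall x, exists y, y < x) -> compact K ->
  exists2 c, c <= x0 & K `<=` `]c, +oo[.
Proof.
move=> nomin cK.
apply: (compact_ind (P := fun A => exists2 c, c <= x0 & A `<=` `]c, +oo[)) => //.
- by exists x0.
- move=> A B [a ax0 Aa] [b bx0 Bb]; exists (Order.min a b); first by rewrite ge_min ax0.
  by move=> z [/Aa|/Bb]; rewrite /= !in_itv /= !andbT gt_min => ->; rewrite ?orbT.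
- by move=> A B AB [c cx0 Bc]; exists c => // z /AB /Bc.
- move=> x _; have [y yx] := nomin x; exists `]y, +oo[; split => //.
    - exact: rray_open.
    - by rewrite /= in_itv /= yx.
  exists (Order.min x0 y); first by rewrite ge_min lexx.
  by move=> z; rewrite /= !in_itv /= !andbT gt_min => ->; rewrite orbT.
Qed.

End CompactOrder.

Section CompactOpen.
Context {U V : topologicalType}.
Local Notation CO := {compact-open, U -> V}.

Lemma compact_open_nbhs_subbasic (f : CO) (B : set CO) : nbhs f B ->
  exists n (K : nat -> set U) (O : nat -> set V),
    (forall i, (i < n)%N -> [/\ compact (K i), open (O i) & f @` K i `<=` O i]) /\
    [set g : CO | forall i, (i < n)%N -> g @` K i `<=` O i] `<=` B.
Proof.
pose D := [set t : nat * (nat -> set U) * (nat -> set V) | forall i, (i < t.1.1)%N ->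
  [/\ compact (t.1.2 i), open (t.2 i) & f @` t.1.2 i `<=` t.2 i]].
pose S (t : nat * (nat -> set U) * (nat -> set V)) :=
  [set g : CO | forall i, (i < t.1.1)%N -> g @` t.1.2 i `<=` t.2 i].
have FS : Filter (filter_from D S).
  apply: filter_from_filter; first by exists (0, fun _ => set0, fun _ => set0)%N.
  move=> [[n K] O] [[n' K'] O'] /= Dt Dt'.
  pose glue T (A A' : nat -> set T) i := if (i < n)%N then A i else A' (i - n)%N.
  exists (n + n', glue _ K K', glue _ O O')%N.
    move=> i /= ilt; rewrite /glue; case: ifP => [/Dt //|/negbT].
    by rewrite -leqNgt => ni; apply: Dt'; rewrite ltn_subLR.
  move=> g /= Sg; split => i /= ilt.
    by have := Sg i (ltn_addr _ ilt); rewrite /glue /= ilt.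
  have ni : (n + i < n)%N = false by rewrite ltnNge leq_addr.
  by have := Sg (n + i)%N; rewrite ltn_add2l /glue /= ni addKn; apply.
have : filter_from D S --> f.
  apply/compact_open_cvgP => K O cK oO fKO.
  by exists (1%N, fun _ => K, fun _ => O) => [i _|g /(_ 0%N)]; [split|apply].
move=> /(_ B) + fB => /(_ fB) [[[n K] O] Dt SB].
by exists n, K, O.
Qed.

End CompactOpen.

(** * Compactly supported homeomorphisms are increasing *)

Lemma homeomorphism_inj (T : topologicalType) (g : T -> T) :
  homeomorphism g -> injective g.
Proof. by case=> h [gK _ _ _]; exact: can_inj gK. Qed.

Lemma homeomorphism_continuous (T : topologicalType) (g : T -> T) :
  homeomorphism g -> continuous g.
Proof. by case=> h [_ _ cg _]. Qed.

Section DenseComplete.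
Context {d : Order.disp_t} {X : orderTopologicalType d}.
Implicit Types (a b c u x y z : X) (g : X -> X).
Hypothesis X_dense : forall x y, x < y -> exists z, x < z < y.
Hypothesis X_complete : forall S : set X, has_sup S -> exists u, supremums S u.

Lemma closed_cover_segment_meet a b (F1 F2 : set X) : a <= b ->
  closed F1 -> closed F2 -> `[a, b] `<=` F1 `|` F2 -> F1 a -> F2 b ->
  exists u, [/\ a <= u <= b, F1 u & F2 u].
Proof.
move=> ab cF1 cF2 abF F1a F2b; pose S := F1 `&` `[a, b].
have Sa : S a by split; rewrite //= in_itv /= lexx ab.
have [u supu] : exists u, supremums S u.
  by apply: X_complete; split; [exists a|exists b => z [_]; rewrite /= in_itv => /andP[]].
have [F1u abu] : S u.
  have cS : closed S by apply: closedI cF1 _; exact: itv_closed.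
  exact: itv_closed_supremums (ex_intro _ a Sa) cS _ supu.
exists u; split => //.
have [->//|ub] := eqVneq u b; have {}ub : u < b.
  by rewrite lt_neqAle ub; move: abu; rewrite /= in_itv => /andP[].
apply: contrapT => nF2u.
have [r ur urF2] := nbhs_above (open_nbhs_nbhs (conj (closed_openC cF2) nF2u)) ub.
have urb : u < Order.min r b by rewrite lt_min ur ub.
have [v /andP[uv]] := X_dense urb; rewrite lt_min => /andP[vr vb].
have av : a <= v by move: abu; rewrite /= in_itv => /andP[au _]; exact: le_trans au (ltW uv).
have abv : `[a, b] v by rewrite /= in_itv /= av ltW.
have : ~ F2 v by apply: urF2; rewrite /= in_itv /= (ltW uv).
case: (abF v abv) => // F1v _.
by move: uv; rewrite ltNge (supu.1 v (conj F1v abv)).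
Qed.

Lemma segment_ivt g a b c : continuous g -> a <= b ->
  (g a <= c <= g b) \/ (g b <= c <= g a) -> exists2 u, a <= u <= b & g u = c.
Proof.
move=> cg ab gabc.
have clF1 : closed (g @^-1` `]-oo, c]) by apply: preimage_closed => // ? _; exact: cg.
have clF2 : closed (g @^-1` `[c, +oo[) by apply: preimage_closed => // ? _; exact: cg.
have cover t : (g @^-1` `]-oo, c]) t \/ (g @^-1` `[c, +oo[) t.
  by rewrite /= !in_itv /= andbT; case: (leP (g t) c) => h; [left|right; exact: ltW].
have antisym u : (g @^-1` `]-oo, c]) u -> (g @^-1` `[c, +oo[) u -> g u = c.
  by rewrite /= !in_itv /= andbT => gc cgu; apply/le_anti; rewrite gc cgu.
have inF1 t : g t <= c -> (g @^-1` `]-oo, c]) t by rewrite /= in_itv.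
have inF2 t : c <= g t -> (g @^-1` `[c, +oo[) t by rewrite /= in_itv /= andbT.
case: gabc => /andP[gac cgb].
- have [u [abu F1u F2u]] := closed_cover_segment_meet ab clF1 clF2
    (fun t _ => cover t) (inF1 _ gac) (inF2 _ cgb).
  by exists u => //; exact: antisym.
- have [u [abu F2u F1u]] := closed_cover_segment_meet ab clF2 clF1
    (fun t _ => proj1 (or_comm _ _) (cover t)) (inF2 _ cgb) (inF1 _ gac).
  by exists u => //; exact: antisym.
Qed.

Lemma continuous_inj_no_valley g x y z : continuous g -> injective g ->
  x < y -> y < z -> ~ (g y < g x /\ g y < g z).
Proof.
move=> cg ig xy yz [yx yz']; case: (leP (g x) (g z)) => xz.
- have gyxz : g y <= g x <= g z by rewrite (ltW yx) xz.
  have [u /andP[yu _] /ig ux] := segment_ivt cg (ltW yz) (or_introl gyxz).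
  by move: (lt_le_trans xy yu); rewrite ux ltxx.
- have gyzx : g y <= g z <= g x by rewrite !ltW.
  have [u /andP[_ uy] /ig uz] := segment_ivt cg (ltW xy) (or_intror gyzx).
  by move: (le_lt_trans uy yz); rewrite uz ltxx.
Qed.

Hypothesis X_nomax : forall x, exists y, x < y.

(* Without a valley at [c1] (fixed, like the larger [c2]) every [t < c1] stays below [c1];
   then a decrease [g y < g x] would be a valley at [y] between [x] and [c1]. *)
Lemma continuous_inj_eventually_id_homo g c0 : continuous g -> injective g ->
  (forall z, c0 <= z -> g z = z) -> {homo g : x y / x <= y}.
Proof.
move=> cg ig gid x y; rewrite le_eqVlt => /orP[/eqP->//|xy].
have [c1] := X_nomax (Order.max y c0); rewrite gt_max => /andP[yc1 c0c1].
have [c2 c1c2] := X_nomax c1.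
have g1 : g c1 = c1 by apply: gid; exact: ltW.
have g2 : g c2 = c2 by apply: gid; exact: ltW (lt_trans c0c1 c1c2).
have below t : t < c1 -> g t < c1.
  move=> tc1; rewrite ltNge le_eqVlt -g1; apply/negP => /orP[/eqP/ig tc|gt].
    by move: tc1; rewrite tc ltxx.
  by apply: (continuous_inj_no_valley cg ig tc1 c1c2); rewrite gt g1 g2.
rewrite leNgt; apply/negP => gyx.
by apply: (continuous_inj_no_valley cg ig xy yc1); rewrite gyx g1 below.
Qed.

Lemma homeo_cpt_homo (g : {compact-open, X -> X}) :
  Homeo_cpt g -> {homo g : x y / x <= y}.
Proof.
move=> [hg cpt] x y; have [c _ suppc] := compact_ubound x X_nomax cpt.
apply: (continuous_inj_eventually_id_homo (c0 := c)).
- exact: homeomorphism_continuous.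
- exact: homeomorphism_inj.
- move=> z cz; apply/eqP; apply: contrapT => /negP /(@subset_closure _ [set x | g x != x]).
  by move/suppc; rewrite /= in_itv /= ltNge cz.
Qed.

End DenseComplete.

(** * Countable approximation *)

Lemma countable_seq_subset (T : eqType) (A : set T) :
  countable A -> countable [set s : seq T | {subset s <= A}].
Proof.
move=> /countable_injP[f finj]; apply/countable_injP.
exists (fun s => pickle (map f s)) => s t; rewrite !inE => sA tA /(pcan_inj pickleK).
elim: s t sA tA => [|x s IH] [|y t] //= sA tA [fxy fst].
have Ax : x \in A by apply: sA; rewrite mem_head.
have Ay : y \in A by apply: tA; rewrite mem_head.
rewrite (finj _ _ Ax Ay fxy) (IH t) // => z zs; [apply: sA|apply: tA];
  by rewrite in_cons zs orbT.
Qed.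

Lemma countableU T (A B : set T) : countable A -> countable B -> countable (A `|` B).
Proof.
move=> cA cB; rewrite (_ : A `|` B = \bigcup_(i in [set: bool]) if i then A else B).
  by apply: bigcup_countable => // -[].
by apply/seteqP; split => [x [Ax|Bx]|x [[] _]]; [exists true|exists false|left|right].
Qed.

Section Approximation.
Context {d : Order.disp_t} {X : orderTopologicalType d}.
Local Notation CO := {compact-open, X -> X}.
Implicit Types (x y z : X) (g : CO) (s : seq (X * X * X)).
Hypothesis X_dense : forall x y, x < y -> exists z, x < z < y.
Hypothesis X_nomax : forall x, exists y, x < y.
Hypothesis homeo_homo : forall g, Homeo_cpt g -> {homo g : x y / x <= y}.

Definition moved (g : X -> X) := [set x | g x != x].

Definition constrained s (g : X -> X) : bool :=
  all (fun t => let: (x, l, r) := t in l < g x < r) s.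

Lemma constrained_cat s s' (g : X -> X) :
  constrained (s ++ s') g = constrained s g && constrained s' g.
Proof. exact: all_cat. Qed.

Lemma open_constrained s : open [set g : CO | constrained s g].
Proof.
elim: s => [|[[x l] r] s IH].
  have -> : [set g : CO | constrained [::] g] = setT by apply/seteqP; split => // g.
  exact: openT.
rewrite (_ : [set g | _] = [set g : CO | g @` [set x] `<=` `]l, r[] `&`
                          [set g : CO | constrained s g]).
  by apply: openI IH; apply: compact_open_open; [exact: compact_set1|exact: itv_open].
apply/seteqP; split => g /=.
  by move=> /andP[lgr gs]; split => // _ [_ -> <-]; rewrite /= in_itv.
move=> [lgr ->]; have : `]l, r[ (g x) by apply: lgr; exists x.
by rewrite /= in_itv andbT.
Qed.

Lemma homeo_cpt_fix_min g y : Homeo_cpt g -> (forall z, y <= z) -> g y = y.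
Proof.
move=> Hg ymin; have [[h [_ hK _ _]] _] := Hg.
by apply/le_anti; rewrite ymin andbT -{2}(hK y); apply: homeo_homo.
Qed.

(* A level [c] gives a region [region c] of [X] and a countable set [D c] dense in it;
   for the long ray, levels are points [c], [region c] is [`]-oo, c[] and [D c] is the
   set of rational points up to [c]. *)
Variables (I : Type) (region D : I -> set X).
Hypothesis D_dense_left : forall c u z, u < z -> region c z -> exists2 e, D c e & u < e < z.
Hypothesis D_dense_right : forall c u z, u < z -> region c u -> exists2 e, D c e & u < e < z.

Definition level_le c c' := region c `<=` region c' /\ D c `<=` D c'.

Definition level_constraints c :=
  [set s : seq (X * X * X) | {subset s <= D c `*` D c `*` D c}].

Lemma D_below c y z (G : set X) : region c y -> nbhs y G -> z < y ->
  exists2 e, D c e & e < y /\ `[e, y] `<=` G.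
Proof.
move=> cy yG zy; have [l ly lyG] := nbhs_below yG zy.
have [e De /andP[le ey]] := D_dense_left ly cy; exists e => //; split => // t.
rewrite /= in_itv /= => /andP[et ty]; apply: lyG.
by rewrite /= in_itv /= ty (lt_le_trans le et).
Qed.

Lemma D_above c y (G : set X) : region c y -> nbhs y G ->
  exists2 e, D c e & y < e /\ `[y, e] `<=` G.
Proof.
move=> cy yG; have [z yz] := X_nomax y; have [r yr yrG] := nbhs_above yG yz.
have [e De /andP[ye er]] := D_dense_right yr cy; exists e => //; split => // t.
rewrite /= in_itv /= => /andP[yt te]; apply: yrG.
by rewrite /= in_itv /= yt (le_lt_trans te er).
Qed.

Section Chain.
Variables (A : set CO) (p : CO) (b : nat -> I) (pick : seq (X * X * X) -> CO).
Hypothesis A_homeo : A `<=` @Homeo_cpt X.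
Hypothesis p_homeo : Homeo_cpt p.
Hypothesis b_homo : {homo b : n m / (n <= m)%N >-> level_le n m}.
Hypothesis moved_p : moved p `<=` region (b 0).
Hypothesis pickP : forall s, A `&` [set g | constrained s g] !=set0 ->
  (A `&` [set g | constrained s g]) (pick s).
Hypothesis moved_pick : forall n s, level_constraints (b n) s ->
  moved (pick s) `<=` region (b n.+1).

Definition chain_homeo g := Homeo_cpt g /\ forall x, (forall n, ~ region (b n) x) -> g x = x.

Definition controlled (Q : set CO) := exists n s, [/\ level_constraints (b n) s,
  constrained s p & forall g, chain_homeo g -> constrained s g -> Q g].

Lemma controlledT : controlled setT.
Proof. by exists 0%N, [::]. Qed.

Lemma controlledS (Q Q' : set CO) : (forall g, chain_homeo g -> Q g -> Q' g) ->
  controlled Q -> controlled Q'.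
Proof.
by move=> QQ' [n [s [Ls ps sQ]]]; exists n, s; split => // g hg /(sQ _ hg) /QQ'; apply.
Qed.

Lemma controlledI (Q Q' : set CO) : controlled Q -> controlled Q' -> controlled (Q `&` Q').
Proof.
move=> [n [s [Ls ps sQ]]] [n' [s' [Ls' ps' sQ']]].
have [[_ Dn] [_ Dn']] := (b_homo (leq_maxl n n'), b_homo (leq_maxr n n')).
exists (maxn n n'), (s ++ s'); split.
- move=> t; rewrite mem_cat => /orP[/Ls|/Ls']; rewrite !inE => -[[? ?] ?].
    by do !split; exact: Dn.
  by do !split; exact: Dn'.
- by rewrite constrained_cat ps ps'.
- by move=> g hg; rewrite constrained_cat => /andP[/(sQ _ hg) ? /(sQ' _ hg)].
Qed.

Lemma chain_homeo_p : chain_homeo p.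
Proof.
split => // x xout; apply/eqP; apply: contrapT => /negP px.
exact: xout 0%N (moved_p px).
Qed.

Lemma region_p n x : region (b n) x -> region (b n) (p x).
Proof.
move=> nx; have [->//|/eqP px] := eqVneq (p x) x.
have /moved_p : p (p x) != p x by apply/negP => /eqP /(homeomorphism_inj p_homeo.1).
exact: (b_homo (leq0n n)).1.
Qed.

Lemma controlled_const {y} {V : set X} : V (p y) ->
  (forall g, chain_homeo g -> g y = p y) -> controlled [set g | V (g y)].
Proof. by move=> Vpy gy; apply: controlledS controlledT => g hg _; rewrite /= gy. Qed.

(* Both [p y] and [y] are squeezed between points of the countable set [D (b n)];
   monotonicity transfers the constraints at [d1 <= y <= d2] to [y]. *)
Lemma controlled_at y (V : set X) : open V -> V (p y) -> controlled [set g | V (g y)].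
Proof.
move=> oV Vpy; have [[n ny]|yout] := pselect (exists n, region (b n) y); last first.
  apply: (controlled_const Vpy) => g [_ gfix].
  have yout' n : ~ region (b n) y by move=> ny; apply: yout; exists n.
  by rewrite gfix // chain_homeo_p.2.
have [[z zy]|ymin] := pselect (exists z, z < y); last first.
  apply: (controlled_const Vpy) => g [Hg _].
  have ymin' t : y <= t by rewrite leNgt; apply/negP => ty; apply: ymin; exists t.
  by rewrite !homeo_cpt_fix_min.
have pzy : p z < p y.
  rewrite lt_neqAle homeo_homo ?(ltW zy) // andbT.
  by apply/negP => /eqP /(homeomorphism_inj p_homeo.1) zy'; move: zy; rewrite zy' ltxx.
have nV : nbhs (p y) V by exact: open_nbhs_nbhs.
have [e1 De1 [e1y e1V]] := D_below (region_p ny) nV pzy.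
have [e2 De2 [ye2 e2V]] := D_above (region_p ny) nV.
have nG : nbhs y (p @^-1` `]e1, e2[).
  apply: (homeomorphism_continuous p_homeo.1); apply: open_nbhs_nbhs; split => //.
  by rewrite /= in_itv /= e1y ye2.
have [d1 Dd1 [d1y d1G]] := D_below ny nG zy.
have [d2 Dd2 [yd2 d2G]] := D_above ny nG.
have pd1 : e1 < p d1 < e2.
  by have := d1G d1; rewrite /= !in_itv /= lexx ltW //; apply.
have pd2 : e1 < p d2 < e2.
  by have := d2G d2; rewrite /= !in_itv /= lexx ltW //; apply.
exists n, [:: (d1, e1, e2); (d2, e1, e2)]; split.
- by move=> t; rewrite !inE => /orP[] /eqP->.
- by rewrite /= pd1 pd2.
move=> g [Hg _] /=; rewrite andbT => /andP[/andP[e1g _] /andP[_ ge2]].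
have gy1 := homeo_homo Hg (ltW d1y); have gy2 := homeo_homo Hg (ltW yd2).
have [gpy|pyg] := leP (g y) (p y).
  by apply: e1V; rewrite /= in_itv /= gpy (ltW (lt_le_trans e1g gy1)).
by apply: e2V; rewrite /= in_itv /= (ltW pyg) (ltW (le_lt_trans gy2 ge2)).
Qed.

Lemma controlled_local x (O : set X) : open O -> O (p x) ->
  exists U, [/\ open U, U x & controlled [set g | g @` U `<=` O]].
Proof.
move=> oO Opx; have [V [oV Vpx VO Vconv]] := open_order_convex_nbhs oO Opx.
have nG : nbhs x (p @^-1` V).
  by apply: (homeomorphism_continuous p_homeo.1); exact: open_nbhs_nbhs.
have [d1 [d2 [/andP[d1x xd2] segG segx]]] := nbhs_segment X_dense X_nomax nG.
exists (interior `[d1, d2]); split => //; first exact: open_interior.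
have Vd1 : V (p d1) by apply: segG; rewrite /= in_itv /= lexx (le_trans d1x xd2).
have Vd2 : V (p d2) by apply: segG; rewrite /= in_itv /= lexx (le_trans d1x xd2).
apply: controlledS (controlledI (controlled_at oV Vd1) (controlled_at oV Vd2)).
move=> g [Hg _] [/= Vg1 Vg2] _ [z /interior_subset zseg <-].
move: zseg; rewrite /= in_itv /= => /andP[d1z zd2].
apply: VO; apply: (Vconv (g d1) _ (g d2)) => //.
by rewrite !(homeo_homo Hg).
Qed.

Lemma controlled_compact (K : set X) (O : set X) : compact K -> open O ->
  p @` K `<=` O -> controlled [set g | g @` K `<=` O].
Proof.
move=> cK oO pKO; apply: (compact_ind (P := fun Y => controlled [set g | g @` Y `<=` O])) => //.
- by apply: controlledS controlledT => g _ _ _ [? []].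
- move=> Y1 Y2 c1 c2; apply: controlledS (controlledI c1 c2).
  move=> g _ [g1 g2] _ [z [Yz|Yz] <-].
    by apply: g1; exists z.
  by apply: g2; exists z.
- by move=> Y1 Y2 Y12; apply: controlledS => g _ gY2 _ [z /Y12 Yz <-]; apply: gY2; exists z.
- by move=> x Kx; apply: controlled_local oO _; apply: pKO; exists x.
Qed.

Lemma controlled_nbhs (B : set CO) : nbhs p B -> controlled B.
Proof.
move=> /compact_open_nbhs_subbasic[n [K [O [KO KOB]]]].
apply: controlledS (fun g _ => KOB g) _.
suff : forall m, (m <= n)%N -> controlled [set g | forall i, (i < m)%N -> g @` K i `<=` O i].
  by apply.
elim=> [|m IH] mn; first by apply: controlledS controlledT => g _ _ i.
have [cK oO pKO] := KO m mn.
apply: controlledS (controlledI (IH (ltnW mn)) (controlled_compact cK oO pKO)).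
by move=> g _ [gm gK] i; rewrite ltnS leq_eqVlt => /orP[/eqP->|/gm].
Qed.

Lemma closure_picks : closure A p -> closure (pick @` [set s | exists n,
  level_constraints (b n) s /\ A `&` [set g | constrained s g] !=set0]) p.
Proof.
move=> clAp B /controlled_nbhs [n [s [Ls ps sB]]].
have sA : A `&` [set g | constrained s g] !=set0.
  by apply: clAp; apply: open_nbhs_nbhs; split => //; exact: open_constrained.
have [As cs] := pickP sA; exists (pick s); split; first by exists s => //; exists n.
apply: sB => //; split; first exact: A_homeo.
move=> x xout; apply/eqP; apply: contrapT => /negP /(moved_pick Ls).
exact: xout n.+1.
Qed.

End Chain.

Hypothesis level_homeo : forall g, Homeo_cpt g -> exists c, moved g `<=` region c.
Hypothesis level_ubound : forall B : set I, countable B ->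
  exists c, forall e, B e -> level_le e c.
Hypothesis D_countable : forall c, countable (D c).

Lemma countable_level_constraints c : countable (level_constraints c).
Proof.
by apply: countable_seq_subset; apply: countableX; [apply: countableX|]; exact: D_countable.
Qed.

Lemma level_chain (p : CO) (pick : seq (X * X * X) -> CO) :
  Homeo_cpt p -> (forall s, Homeo_cpt (pick s)) ->
  exists b : nat -> I, [/\ {homo b : n m / (n <= m)%N >-> level_le n m},
    moved p `<=` region (b 0) &
    forall n s, level_constraints (b n) s -> moved (pick s) `<=` region (b n.+1)].
Proof.
move=> Hp Hpick; have [c0 _] := level_homeo Hp.
have /choice[lvl lvlP] : forall g, exists c, Homeo_cpt g -> moved g `<=` region c.
  by move=> g; have [/level_homeo[c]|] := pselect (Homeo_cpt g); [exists c|exists c0].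
have /choice[ub ubP] : forall B : set I, exists c,
    countable B -> forall e, B e -> level_le e c.
  by move=> B; have [/level_ubound[c]|] := pselect (countable B); [exists c|exists c0].
pose next c := ub (c |` (lvl \o pick) @` level_constraints c).
have nextP c : forall e, (c |` (lvl \o pick) @` level_constraints c) e -> level_le e (next c).
  apply: ubP; apply: countableU (countable1 c) _.
  exact: card_le_trans (card_image_le _ _) (countable_level_constraints c).
pose b n := iter n next (lvl p); exists b; split.
- apply: homo_leq => [c|c1 c2 c3 [r12 D12] [r23 D23] |n].
  + by split.
  + by split; [exact: subset_trans r23|exact: subset_trans D23].
  + by apply: nextP; left.
- exact: lvlP.
- move=> n s Ls; apply: subset_trans (lvlP _ (Hpick s)) _.
  have [] := nextP (b n) (lvl (pick s)); last by [].
  by right; exists s.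
Qed.

Theorem homeo_cpt_countably_tight : countably_tight_subspace (@Homeo_cpt X).
Proof.
move=> A p AH Hp clAp.
pose pick s := xget p (A `&` [set g | constrained s g]).
have pickP s : A `&` [set g | constrained s g] !=set0 ->
    (A `&` [set g | constrained s g]) (pick s) by exact: xgetPex.
have Hpick s : Homeo_cpt (pick s) by rewrite /pick; case: xgetP => // g _ [/AH].
have [b [b_homo moved_p moved_pick]] := level_chain Hp Hpick.
eexists; last exact: closure_picks AH Hp b_homo moved_p pickP moved_pick clAp.
split; first by move=> _ [s [n [_ /pickP[As _]]] <-].
apply: card_le_trans (card_image_le _ _) _.
apply: (@sub_countable _ _ _ (\bigcup_n level_constraints (b n))).
  by apply: subset_card_le => s [n [Ls _]]; exists n.
by apply: bigcup_countable => // n _; exact: countable_level_constraints.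
Qed.

End Approximation.

(** * The long ray *)

Section Omega1.
Context {d : Order.disp_t} {W : orderType d}.
Hypothesis W_omega1 : is_omega1 W.

Lemma omega1_min (S : set W) : S !=set0 -> exists2 m, S m & lbound S m.
Proof.
case: W_omega1 => wf _ _ [w Sw]; elim/(well_founded_ind wf): w Sw => w IH Sw.
have [[v [Sv vw]]|wmin] := pselect (exists v, S v /\ v < w); first exact: IH Sv.
by exists w => // v Sv; rewrite leNgt; apply/negP => vw; apply: wmin; exists v.
Qed.

Lemma omega1_sup (S : set W) : has_ubound S -> exists w, supremums S w.
Proof. by move=> /omega1_min[w ubw wmin]; exists w. Qed.

Lemma omega1_countable_ubound (S : set W) : countable S -> exists w, forall v, S v -> v < w.
Proof.
case: W_omega1 => _ unc segc cS; apply: contrapT => /forallNP nub; apply: unc.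
apply: (@sub_countable _ _ _ (\bigcup_(v in S) ([set v] `|` [set u | u < v]))).
  apply: subset_card_le => w _; have /existsNP[v /not_implyP[Sv /negP]] := nub w.
  by rewrite -leNgt le_eqVlt => /orP[/eqP->|wv]; exists v => //; [left|right].
by apply: bigcup_countable => // v _; apply: countableU; [exact: countable1|exact: segc].
Qed.

Lemma omega1_nomax (w : W) : exists w', w < w'.
Proof.
by have [w' ww'] := omega1_countable_ubound (countable1 w); exists w'; exact: ww'.
Qed.

Lemma omega1_succ (w : W) : exists2 w', w < w' & forall v, w < v -> w' <= v.
Proof.
have [v wv] := omega1_nomax w.
by have [w' ww' w'min] := @omega1_min (> w) (ex_intro _ v wv); exists w'.
Qed.

Lemma omega1_bottom : exists w0 : W, forall w, w0 <= w.
Proof.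
have [w _] : [set: W] !=set0.
  case: W_omega1 => _ uncW _; apply/set0P/eqP => W0.
  by apply: uncW; rewrite W0; exact: countable0.
by have [w0 _ w0min] := @omega1_min setT (ex_intro _ w I); exists w0 => v; exact: w0min.
Qed.

End Omega1.

Section UnitInterval.
Context {R : realType}.
Implicit Types t : @I01 R.

Lemma in01_0 : @in01 R 0. Proof. by rewrite /in01 lexx ltr01. Qed.

Definition I01_0 : @I01 R := exist _ 0%R in01_0.

Definition mk01 (r : R) : @I01 R := insubd I01_0 r.

Lemma mk01K (r : R) : in01 r -> val (mk01 r) = r.
Proof. exact: insubdK. Qed.

Lemma I01_ge0 t : (0 <= val t)%R. Proof. by case: t => r /= /andP[]. Qed.

Lemma I01_lt1 t : (val t < 1)%R. Proof. by case: t => r /= /andP[]. Qed.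

Lemma I01_0_le t : I01_0 <= t. Proof. by rewrite leEsub /= I01_ge0. Qed.

End UnitInterval.

Section LongRay.
Variables (R : realType) (d : Order.disp_t) (W : orderType d).
Hypothesis W_omega1 : is_omega1 W.
Local Notation X := (@LongRay R d W).
Implicit Types (x y z u v : X).

Lemma ray_le x y : (x <= y) = (x.1 < y.1) || (x.1 == y.1) && (x.2 <= y.2).
Proof. by case: x y => [x1 x2] [y1 y2]; rewrite /= [LHS]lexi_pair; case: (ltgtP x1 y1). Qed.

Lemma ray_lt x y : (x < y) = (x.1 < y.1) || (x.1 == y.1) && (x.2 < y.2).
Proof. by case: x y => [x1 x2] [y1 y2]; rewrite /= [LHS]ltxi_pair; case: (ltgtP x1 y1). Qed.

Lemma ray_le_fst x y : x <= y -> x.1 <= y.1.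
Proof. by rewrite ray_le => /orP[/ltW//|/andP[/eqP->]]. Qed.

Lemma ray_lt_fst x y : x.1 < y.1 -> x < y.
Proof. by rewrite ray_lt => ->. Qed.

Lemma ray_le_snd x y : x.1 = y.1 -> (x <= y) = (x.2 <= y.2).
Proof. by move=> e; rewrite ray_le e ltxx eqxx. Qed.

Lemma ray_lt_snd x y : x.1 = y.1 -> (x < y) = (x.2 < y.2).
Proof. by move=> e; rewrite ray_lt e ltxx eqxx. Qed.

Definition rational_point x := exists q : rat, val x.2 = ratr q.

Lemma ray_dense_rational u z : u < z -> exists2 c, rational_point c & u < c < z.
Proof.
pose at_q (q : rat) : X := (u.1, mk01 (ratr q)).
have at_qK q : (val u.2 < (ratr q : R) < 1)%R -> val (at_q q).2 = ratr q.
  move=> /andP[uq q1].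
  by rewrite mk01K // /in01 q1 andbT (le_trans (I01_ge0 _) (ltW uq)).
rewrite ray_lt => /orP[uz|/andP[/eqP uz uz2]].
  have [q] := rat_in_itvoo (I01_lt1 u.2); rewrite in_itv /= => uq1.
  exists (at_q q); first by exists q; rewrite at_qK.
  have uq : u.2 < (at_q q).2 by rewrite ltEsub at_qK //; case/andP: uq1.
  by rewrite (ray_lt_snd (x := u)) // uq ray_lt_fst.
have [q] := rat_in_itvoo uz2; rewrite in_itv /= => /andP[uq qz].
have uq1 : (val u.2 < (ratr q : R) < 1)%R by rewrite uq (lt_trans qz (I01_lt1 _)).
exists (at_q q); first by exists q; rewrite at_qK.
have uqz : u.2 < (at_q q).2 < z.2 by rewrite !ltEsub at_qK // uq qz.
by rewrite ray_lt_snd // (ray_lt_snd (y := z)) /= ?uz.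
Qed.

Lemma ray_dense u z : u < z -> exists c, u < c < z.
Proof. by move=> /ray_dense_rational[c _ ucz]; exists c. Qed.

Lemma ray_nomax x : exists y, x < y.
Proof.
by have [w xw] := omega1_nomax W_omega1 x.1; exists (w, I01_0); exact: ray_lt_fst.
Qed.

Lemma ray_bottom : exists2 m : X, rational_point m & forall x, m <= x.
Proof.
have [w0 w0min] := omega1_bottom W_omega1; exists (w0, I01_0).
  by exists 0%R; rewrite rmorph0.
move=> x; have := w0min x.1; rewrite le_eqVlt => /orP[/eqP e|w0x].
  by rewrite ray_le_snd // I01_0_le.
by apply: ltW; apply: ray_lt_fst.
Qed.

Lemma ray_countable_ubound (S : set X) : countable S -> exists b, forall x, S x -> x < b.
Proof.
move=> cS; have cS1 : countable (fst @` S) := card_le_trans (card_image_le fst S) cS.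
have [w Sw] := omega1_countable_ubound W_omega1 cS1.
by exists (w, I01_0) => x Sx; apply: ray_lt_fst; apply: Sw; exists x.
Qed.

Lemma countable_rational_le b : countable [set y | y <= b /\ rational_point y].
Proof.
have [w bw] := omega1_nomax W_omega1 b.1; case: W_omega1 => _ _ segc.
pose at_q (vq : W * rat) : X := (vq.1, mk01 (ratr vq.2)).
apply: (@sub_countable _ _ _ (at_q @` ([set v | v < w] `*` [set: rat]))).
  apply: subset_card_le => -[y1 y2] [/ray_le_fst /= yb [q yq]]; exists (y1, q).
    by split => //=; exact: le_lt_trans yb bw.
  by congr pair; apply: val_inj; rewrite mk01K -yq //; exact: valP.
by apply: card_le_trans (card_image_le _ _) _; exact: countableX.
Qed.

Section RayComplete.
Variables (S : set X) (ws : W).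
Hypothesis ws_sup : supremums (fst @` S) ws.

Lemma fst_le_sup s : S s -> s.1 <= ws.
Proof. by move=> Ss; apply: ws_sup.1; exists s. Qed.

Lemma sup_le_fst v : ubound S v -> ws <= v.1.
Proof. by move=> Sv; apply: ws_sup.2 => _ [s Ss <-]; exact/ray_le_fst/Sv. Qed.

Lemma ray_supremums_fresh : ~ (exists s, S s /\ s.1 = ws) -> supremums S (ws, I01_0).
Proof.
move=> noS; split => [s Ss|v Sv].
  apply: ltW; apply: ray_lt_fst; rewrite lt_neqAle fst_le_sup // andbT.
  by apply/eqP => e; apply: noS; exists s.
have := sup_le_fst Sv; rewrite [ws <= _]le_eqVlt => /orP[/eqP e|wv].
  by rewrite ray_le_snd // I01_0_le.
by apply: ltW; apply: ray_lt_fst.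
Qed.

Hypothesis ws_attained : exists s, S s /\ s.1 = ws.

Let top := [set val s.2 | s in S `&` [set s | s.1 = ws]].

Let top_ub : has_ubound top.
Proof. by exists 1%R => _ [s _ <-]; exact/ltW/I01_lt1. Qed.

Let le_sup_top s : S s -> s.1 = ws -> (val s.2 <= sup top)%R.
Proof. by move=> Ss sws; apply: ub_le_sup top_ub _ _; exists s. Qed.

Let sup_top_le v : ubound S v -> v.1 = ws -> (sup top <= val v.2)%R.
Proof.
move=> Sv vws; have [s1 [Ss1 s1ws]] := ws_attained.
apply: ge_sup; first by exists (val s1.2), s1.
by move=> _ [s [Ss sws] <-]; have := Sv s Ss; rewrite ray_le_snd ?sws // leEsub.
Qed.

Lemma ray_supremums_top : (sup top < 1)%R -> supremums S (ws, mk01 (sup top)).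
Proof.
move=> lt1; have [s1 [Ss1 s1ws]] := ws_attained.
have top01 : in01 (sup top) by rewrite /in01 lt1 (le_trans (I01_ge0 s1.2)) ?le_sup_top.
split => [s Ss|v Sv].
  have := fst_le_sup Ss; rewrite [_ <= ws]le_eqVlt => /orP[/eqP e|sw].
    by rewrite ray_le_snd // leEsub /= mk01K // le_sup_top.
  by apply: ltW; apply: ray_lt_fst.
have := sup_le_fst Sv; rewrite [ws <= _]le_eqVlt => /orP[/eqP e|wv].
  by rewrite ray_le_snd // leEsub /= mk01K // sup_top_le.
by apply: ltW; apply: ray_lt_fst.
Qed.

Lemma ray_supremums_succ w' : (1 <= sup top)%R -> ws < w' ->
  (forall w, ws < w -> w' <= w) -> supremums S (w', I01_0).
Proof.
move=> ge1 wsw' w'min; split => [s Ss|v Sv].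
  by apply: ltW; apply: ray_lt_fst; exact: le_lt_trans (fst_le_sup Ss) wsw'.
have := sup_le_fst Sv; rewrite [ws <= _]le_eqVlt => /orP[/eqP e|wv].
  by have := lt_le_trans (I01_lt1 v.2) (le_trans ge1 (sup_top_le Sv (esym e))); rewrite ltxx.
have := w'min _ wv; rewrite [w' <= _]le_eqVlt => /orP[/eqP e|w'v].
  by rewrite ray_le_snd // I01_0_le.
by apply: ltW; apply: ray_lt_fst.
Qed.

End RayComplete.

Lemma ray_complete (S : set X) : has_sup S -> exists u, supremums S u.
Proof.
move=> [_ [B SB]]; have [ws ws_sup] : exists ws, supremums (fst @` S) ws.
  by apply: (omega1_sup W_omega1); exists B.1 => _ [s Ss <-]; exact/ray_le_fst/SB.
have [ws_att|noS] := pselect (exists s, S s /\ s.1 = ws); last first.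
  by exists (ws, I01_0); exact: ray_supremums_fresh.
have [lt1|ge1] := ltP (sup [set val s.2 | s in S `&` [set s | s.1 = ws]]) 1%R.
  by eexists; exact: ray_supremums_top lt1.
have [w' wsw' w'min] := omega1_succ W_omega1 ws.
by exists (w', I01_0); exact: ray_supremums_succ ge1 wsw' w'min.
Qed.

Lemma ray_compact_bounded (K : set X) : compact K -> exists c, K `<=` `]-oo, c[.
Proof.
have [m _ _] := ray_bottom.
by move=> /(compact_ubound m ray_nomax)[c _ Kc]; exists c.
Qed.

Theorem long_ray_countably_tight : countably_tight_subspace (@Homeo_cpt X).
Proof.
apply: (homeo_cpt_countably_tight ray_dense ray_nomax
  (homeo_cpt_homo ray_dense ray_complete ray_nomax)
  (region := fun b => `]-oo, b[) (D := fun b => [set y | y <= b /\ rational_point y])).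
- move=> b u z uz; rewrite /= in_itv /= => zb.
  have [c Qc /andP[uc cz]] := ray_dense_rational uz.
  by exists c; [split => //; exact/ltW/(lt_trans cz)|rewrite uc].
- move=> b u z uz; rewrite /= in_itv /= => ub; have uzb : u < Order.min z b by rewrite lt_min uz.
  have [c Qc /andP[uc]] := ray_dense_rational uzb; rewrite lt_min => /andP[cz cb].
  by exists c; [split => //; exact: ltW|rewrite uc].
- move=> g [_ cpt]; have [c Kc] := ray_compact_bounded cpt.
  by exists c => x gx; apply: Kc; exact: subset_closure.
- move=> B /ray_countable_ubound[b Bb]; exists b => e /Bb eb; split => y /=.
    by rewrite !in_itv /= => /lt_trans; apply.
  by move=> [ye Qy]; split => //; exact: le_trans ye (ltW eb).
- exact: countable_rational_le.
Qed.

End LongRay.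

(** * The long line *)

Section LongLine.
Variables (R : realType) (d : Order.disp_t) (W : orderType d).
Local Notation Y := (@LongRay R d W).
Local Notation L := (@LongLine R d W).
Local Notation Yo := (@LongRay_ord R d W).
Variable m : Y.
Hypothesis m_bottom : forall x : Y, m <= x.
Implicit Types (x y : Y) (p q : L).
Local Notation to_line := (@exist _ (fun t => is_true (@LL_pred R d W t)) _).

Lemma lr_minimalE x : lr_minimal (x : Yo) = (x == m).
Proof.
apply/idP/eqP => [/asboolP xmin|->]; last exact/asboolP.
by apply/le_anti; rewrite m_bottom xmin.
Qed.

Lemma pos_subproof x : @LL_pred R d W (true, ((m : Yo), (x : Yo))).
Proof. by rewrite /LL_pred /= lr_minimalE. Qed.

Definition pos x : L := to_line (pos_subproof x).

(* [insubd] sends [neg m] to [pos m]: the two copies of the ray are glued at [m]. *)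
Definition neg x : L := insubd (pos m) (false, ((x : Yo), (m : Yo))).

Definition abs p : Y := if (val p).1 then (val p).2.2 else (val p).2.1.

Lemma val_neg x : x != m -> val (neg x) = (false, ((x : Yo), (m : Yo))).
Proof. by move=> xm; rewrite /neg val_insubd /LL_pred /= !lr_minimalE eqxx xm. Qed.

Lemma neg_m : neg m = pos m.
Proof. by apply: val_inj; rewrite /neg val_insubd /LL_pred /= !lr_minimalE eqxx. Qed.

Variant line_spec : L -> Prop :=
  | LinePos x : line_spec (pos x)
  | LineNeg x of x != m : line_spec (neg x).

Lemma lineP p : line_spec p.
Proof.
case: p => -[[] [y1 y2]] py.
  have -> : to_line py = pos y2.
    by apply: val_inj; move: (py); rewrite /LL_pred /= lr_minimalE => /eqP ->.
  exact: LinePos.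
have /andP[/eqP y2m y1m] : (y2 == m) && (y1 != m).
  by move: (py); rewrite /LL_pred /= !lr_minimalE.
have -> : to_line py = neg y1.
  by apply: val_inj; rewrite val_neg //= y2m.
exact: LineNeg.
Qed.

Lemma abs_pos x : abs (pos x) = x. Proof. by []. Qed.

Lemma abs_neg x : abs (neg x) = x.
Proof. by have [->|xm] := eqVneq x m; [rewrite neg_m|rewrite /abs val_neg]. Qed.

Lemma le_m x : (x <= m) = (x == m).
Proof. by apply/idP/eqP => [xm|->//]; apply/le_anti; rewrite xm m_bottom. Qed.

Lemma le_pos x y : (pos x <= pos y) = (x <= y).
Proof. by rewrite leEsub /= !lexi_pair /= leEdual lexx. Qed.

Lemma le_negpos x y : neg x <= pos y.
Proof.
have [->|xm] := eqVneq x m; first by rewrite neg_m le_pos.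
by rewrite leEsub /= val_neg //= !lexi_pair.
Qed.

Lemma le_posneg x y : (pos x <= neg y) = (x == m) && (y == m).
Proof.
have [->|ym] := eqVneq y m; first by rewrite neg_m le_pos le_m andbT.
by rewrite andbF leEsub /= val_neg //= !lexi_pair.
Qed.

Lemma le_neg x y : (neg x <= neg y) = (y <= x).
Proof.
have [->|xm] := eqVneq x m; have [->|ym] := eqVneq y m; rewrite ?lexx //.
- by rewrite neg_m le_posneg le_m eqxx (negbTE ym).
- by rewrite neg_m le_negpos m_bottom.
- by rewrite leEsub /= !val_neg //= !lexi_pair /= !leEdual lexx /= implybT andbT.
Qed.

Lemma lt_pos x y : (pos x < pos y) = (x < y). Proof. by rewrite !ltNge le_pos. Qed.

Lemma lt_neg x y : (neg x < neg y) = (y < x). Proof. by rewrite !ltNge le_neg. Qed.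

Lemma lt_negpos x y : (neg x < pos y) = ~~ ((x == m) && (y == m)).
Proof. by rewrite ltNge le_posneg andbC. Qed.

Lemma lt_posneg x y : (pos x < neg y) = false.
Proof. by rewrite ltNge le_negpos. Qed.

Lemma le_pos_abs p : p <= pos (abs p).
Proof. by case: (lineP p) => [x|x _]; rewrite ?abs_neg ?le_negpos. Qed.

Lemma neg_abs_le p : neg (abs p) <= p.
Proof. by case: (lineP p) => [x|x _]; rewrite ?abs_pos ?abs_neg ?le_negpos. Qed.

Lemma abs_lt p y : (abs p < y) = (neg y < p) && (p < pos y).
Proof.
case: (lineP p) => [x|x xm]; last by rewrite abs_neg lt_neg lt_negpos (negbTE xm) /= andbT.
rewrite abs_pos lt_negpos lt_pos; case: (ltP x y) => xy; rewrite ?andbF //.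
by rewrite andbT; apply/esym/negP => /andP[/eqP ym _]; move: xy; rewrite ym ltNge m_bottom.
Qed.

Hypothesis W_omega1 : is_omega1 W.

Lemma line_dense_rational p q : p < q -> exists2 c, rational_point (abs c) & p < c < q.
Proof.
case: (lineP p) => [x|x xm]; case: (lineP q) => [y|y ym].
- rewrite lt_pos => /ray_dense_rational[c Qc /andP[xc cy]].
  by exists (pos c); rewrite ?abs_pos // !lt_pos xc.
- by rewrite lt_posneg.
- move=> _; have mx : m < x by rewrite lt_neqAle eq_sym xm m_bottom.
  have [c Qc /andP[mc cx]] := ray_dense_rational mx.
  by exists (neg c); rewrite ?abs_neg // lt_neg cx lt_negpos (gt_eqF mc).
- rewrite lt_neg => /ray_dense_rational[c Qc /andP[yc cx]].
  by exists (neg c); rewrite ?abs_neg // !lt_neg cx.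
Qed.

Lemma line_dense p q : p < q -> exists c, p < c < q.
Proof. by move=> /line_dense_rational[c _ pcq]; exists c. Qed.

Lemma line_nomax p : exists q, p < q.
Proof.
case: (lineP p) => [x|x xm]; last by exists (pos m); rewrite lt_negpos (negbTE xm).
by have [y xy] := ray_nomax W_omega1 x; exists (pos y); rewrite lt_pos.
Qed.

Lemma line_nomin p : exists q, q < p.
Proof.
case: (lineP p) => [x|x xm]; last first.
  by have [y xy] := ray_nomax W_omega1 x; exists (neg y); rewrite lt_neg.
have [y my] := ray_nomax W_omega1 m.
by exists (neg y); rewrite lt_negpos (gt_eqF my).
Qed.

Lemma line_supremums_pos (S : set L) t : [set x | S (pos x)] !=set0 ->
  supremums [set x | S (pos x)] t -> supremums S (pos t).
Proof.
move=> [x0 Sx0] [tub tmin]; split => [p Sp|q Sq].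
  by case: (lineP p) Sp => [x Sx|x _ _]; rewrite ?le_pos ?le_negpos ?tub.
case: (lineP q) Sq => [y Sy|y ym Sy].
  by rewrite le_pos; apply: tmin => x Sx; rewrite -le_pos; exact: Sy.
by have := Sy _ Sx0; rewrite le_posneg (negbTE ym) andbF.
Qed.

Lemma line_supremums_neg (S : set L) i : ~ (exists x, S (pos x)) -> S !=set0 ->
  supremums (lbound [set x | S (neg x)]) i -> supremums S (neg i).
Proof.
move=> noS [p0 Sp0] [iub imin].
have Sneg p : S p -> exists2 x, S (neg x) & p = neg x.
  by case: (lineP p) => [x Sx|x _ Sx]; [case: noS; exists x|exists x].
split => [p /Sneg[x Sx ->]|q Sq].
  by rewrite le_neg; apply: imin => y; apply.
case: (lineP q) Sq => [y _|y _ Sy]; first exact: le_negpos.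
by rewrite le_neg; apply: iub => x Sx; rewrite -le_neg; exact: Sy.
Qed.

Lemma line_complete (S : set L) : has_sup S -> exists u, supremums S u.
Proof.
move=> [[p0 Sp0] [B SB]]; have [[x0 Sx0]|noS] := pselect (exists x, S (pos x)).
  have [t supt] : exists t, supremums [set x | S (pos x)] t.
    apply: (ray_complete W_omega1); split; first by exists x0.
    exists (abs B) => x Sx; rewrite -le_pos.
    exact: le_trans (SB _ Sx) (le_pos_abs B).
  by exists (pos t); apply: line_supremums_pos supt; exists x0.
have [x1 Sx1] : exists x1, S (neg x1).
  by case: (lineP p0) Sp0 => [x Sx|x _ Sx]; [case: noS; exists x|exists x].
have [i supi] : exists i, supremums (lbound [set x | S (neg x)]) i.
  by apply: (ray_complete W_omega1); split; [exists m => x _|exists x1 => y; apply].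
by exists (neg i); apply: line_supremums_neg supi => //; exists p0.
Qed.

Lemma countable_line_rational_le b : countable [set p | abs p <= b /\ rational_point (abs p)].
Proof.
pose Q := [set y : Y | y <= b /\ rational_point y].
apply: (@sub_countable _ _ _ (pos @` Q `|` neg @` Q)).
  apply: subset_card_le => p; case: (lineP p) => [x|x _].
    by rewrite /= abs_pos => Qx; left; exists x.
  by rewrite /= abs_neg => Qx; right; exists x.
have cQ : countable Q := countable_rational_le W_omega1 b.
by apply: countableU; exact: card_le_trans (card_image_le _ _) cQ.
Qed.

Lemma line_compact_bounded (K : set L) : compact K -> exists b, K `<=` [set p | abs p < b].
Proof.
move=> cK; have [c1 _ Kc1] := compact_ubound (pos m) line_nomax cK.
have [c2 _ Kc2] := compact_lbound (pos m) line_nomin cK.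
exists (Order.max (abs c1) (abs c2)) => p Kp.
have pc1 : p < c1 by have /= := Kc1 _ Kp; rewrite in_itv.
have c2p : c2 < p by have /= := Kc2 _ Kp; rewrite in_itv /= andbT.
change (abs p < Order.max (abs c1) (abs c2)); rewrite abs_lt; apply/andP; split.
  apply: le_lt_trans c2p; apply: le_trans (neg_abs_le c2).
  by rewrite le_neg le_max lexx orbT.
apply: lt_le_trans pc1 _; apply: le_trans (le_pos_abs c1) _.
by rewrite le_pos le_max lexx.
Qed.

End LongLine.

Theorem long_line_countably_tight (R : realType) (d : Order.disp_t) (W : orderType d) :
  is_omega1 W -> countably_tight_subspace (@Homeo_cpt (@LongLine R d W)).
Proof.
move=> W_omega1; have [m _ m_bottom] := ray_bottom R W_omega1.
have dense := line_dense m_bottom; have nomax := line_nomax m_bottom W_omega1.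
apply: (homeo_cpt_countably_tight dense nomax
  (homeo_cpt_homo dense (line_complete m_bottom W_omega1) nomax)
  (region := fun b => [set p | abs p < b])
  (D := fun b => [set p | abs p <= b /\ rational_point (abs p)])).
- move=> b u z uz; rewrite /= (abs_lt m_bottom) => /andP[bz zb].
  have uz' : Order.max u (neg m_bottom b) < z by rewrite gt_max uz bz.
  have [c Qc] := line_dense_rational m_bottom uz'; rewrite gt_max => /andP[/andP[uc bc] cz].
  exists c; last by rewrite uc cz.
  by split => //; apply: ltW; rewrite (abs_lt m_bottom) bc (lt_trans cz zb).
- move=> b u z uz; rewrite /= (abs_lt m_bottom) => /andP[bu ub].
  have uz' : u < Order.min z (pos m_bottom b) by rewrite lt_min uz ub.
  have [c Qc] := line_dense_rational m_bottom uz'; rewrite lt_min => /andP[uc /andP[cz cb]].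
  exists c; last by rewrite uc cz.
  by split => //; apply: ltW; rewrite (abs_lt m_bottom) cb (lt_trans bu uc).
- move=> g [_ cpt]; have [b Kb] := line_compact_bounded m_bottom W_omega1 cpt.
  by exists b => x gx; apply: Kb; exact: subset_closure.
- move=> B /(ray_countable_ubound W_omega1)[b Bb]; exists b => e /Bb eb.
  split=> p /=; first by move/lt_trans; apply.
  by move=> [pe Qp]; split => //; exact: le_trans pe (ltW eb).
- exact: countable_line_rational_le.
Qed.

Theorem proposition5p1 (R : realType) (d : Order.disp_t) (W : orderType d) :
  is_omega1 W ->
  countably_tight_subspace (@Homeo_cpt (@LongRay R d W)) /\
  countably_tight_subspace (@Homeo_cpt (@LongLine R d W)).
Proof.
by move=> W_omega1; split; [exact: long_ray_countably_tight|exact: long_line_countably_tight].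
Qed.
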